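(* Let $D$ be a ZX-diagram and $c$ a cycle in $D$. Let $t_1,\dots,t_n$ be tokens on $D$ and $s$ a token state with $t_1\cdots t_n\leadsto^* s$. Then for every non-null term $t$ of $s$, $P(c,t_1\cdots t_n)=P(c,t)$.
   Context: ZX-diagrams. A (pure) ZX-diagram is built from generators by sequential composition $D_2\circ D_1$ (the output edges of $D_1$ are joined to the equally many input edges of $D_2$, the latter being relabeled by the former) and parallel composition $D_1\otimes D_2$. The generators are: the identity (a single wire), the swap (two crossing wires), the cup (two input edges $e_0,e_1$, no output), the cap (no input, two output edges $e_0,e_1$), the green spider $Z^n_m(\alpha)$ with $\alpha\in\mathbb R$, input edges $e_1,\dots,e_n$ and output edges $e'_1,\dots,e'_m$, and the Hadamard gate $H$ with input edge $e_0$ and output edge $e_1$. Diagrams are read top to bottom; distinct edges have distinct labels; identity and swap introduce no node. $\mathcal E(D)$ is the set of edges. Each edge has a top and a bottom end; top-to-bottom is the direction $\downarrow$, the reverse is $\uparrow$. Tokens. A token is a triple $(e\,d\,x)\in\mathcal E(D)\times\{\downarrow,\uparrow\}\times\{0,1\}$; token states are elements of the commutative polynomial algebra $\mathbf{tkS}(D)=\mathbb C[\mathbf{tk}(D)]$ whose indeterminates are the tokens; terms are monomials with nonzero coefficient. Rules ($x,y,b\in\{0,1\}$, $\neg x=1-x$): Collision: $(e\downarrow x)(e\uparrow y)\leadsto_c\delta_{x,y}$. Diffusion: cup: $(e_b\downarrow x)\leadsto_d(e_{\neg b}\uparrow x)$; cap: $(e_b\uparrow x)\leadsto_d(e_{\neg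 b}\downarrow x)$; green spider: $(e_k\downarrow x)\leadsto_d e^{i\alpha x}\prod_{i\neq k}(e_i\uparrow x)\prod_j(e'_j\downarrow x)$, $(e'_k\uparrow x)\leadsto_d e^{i\alpha x}\prod_{j\neq k}(e'_j\downarrow x)\prod_i(e_i\uparrow x)$; Hadamard: $(e_0\downarrow x)\leadsto_d\frac{(-1)^x}{\sqrt2}(e_1\downarrow x)+\frac1{\sqrt2}(e_1\downarrow\neg x)$, $(e_1\uparrow x)\leadsto_d\frac{(-1)^x}{\sqrt2}(e_0\uparrow x)+\frac1{\sqrt2}(e_0\uparrow\neg x)$. A step $\leadsto_d$ (resp. $\leadsto_c$) chooses a term and a token (resp. colliding pair) occurring as a factor, replaces it by the right-hand side and expands. A token state is collision-free if no $\leadsto_c$ step applies. $s\leadsto u$ iff $s\leadsto_d s'\leadsto_c^*u$ with $u$ collision-free; $\leadsto^*$ is the reflexive-transitive closure. Paths, cycles, polarity. View $D$ as a multigraph whose vertices are the occurrences of cups, caps, green spiders and Hadamard gates (plus an endpoint for each dangling edge end) and whose edges are those of $D$. A path $(e_0,\dots,e_n)$ is a sequence of pairwise distinct edges with a traversal going from $e_i$ to $e_{i+1}$ through a common vertex $g_i$, the $g_i$ pairwise distinct; the orientation of $e_i$ is $\downarrow$ if traversed from top end to bottom end and $\uparrow$ otherwise. A cycle is such a path whose traversal, after its last edge, returns through a vertex to its first edge. For a token $t=(e\,d\,x)$ and a path or cycle $c$: $P(c,t)=1$ if $e\in c$ with orientation $d$, $-1$ if $e\in c$ with the opposite orientation,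 $0$ otherwise; $P(c,\alpha t_1\cdots t_m)=\sum_iP(c,t_i)$, $P(c,\alpha)=0$ for constants. *)

From HB Require Import structures.
From mathcomp Require Import all_boot all_order all_algebra.
From mathcomp Require Import complex finmap multiset Rstruct.
From Stdlib Require Reals.
Notation R := Rdefinitions.R.

Set Implicit Arguments.
Unset Strict Implicit.
Unset Printing Implicit Defensive.

Import Order.TTheory GRing.Theory Num.Theory.

Local Open Scope ring_scope.

Definition Cplx : Type := R[i].

Definition expi (a : R) : Cplx := (Rtrigo_def.cos a +i* Rtrigo_def.sin a)%C.

Definition phase (a : R) (x : bool) : Cplx := if x then expi a else 1.

Definition invsqrt2 : Cplx := (((Num.sqrt (2 : R))^-1)%:C)%C.

(* GZ n m a is the green spider Z^n_m(a): n inputs, m outputs. *)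
Inductive generator :=
| GId | GSwap | GCup | GCap | GZ of nat & nat & R | GH.

(* DSeq D1 D2 is the sequential composition D2 \circ D1 (D1 on top),
   DPar D1 D2 is the parallel composition D1 \otimes D2. *)
Inductive diagram :=
| DGen of generator
| DSeq of diagram & diagram
| DPar of diagram & diagram.

(* Labelled form of a diagram: edges are labelled by natural numbers.        *)
(* Each node occurrence (cup, cap, green spider, Hadamard) records its input *)
(* edges (in order e_1..e_n / e_0,e_1 / e_0) and its output edges.           *)

Inductive node_kind := NCup | NCap | NZ of R | NH.

Record node := Node { nkind : node_kind; nins : seq nat; nouts : seq nat }.

(* fbound: all labels are < fbound; fedges: the edge set E(D);
   fins / fouts: the (ordered) dangling input / output edges. *)
Record fdiag := FDiag {
  fbound : nat; fedges : seq nat; fins : seq nat; fouts : seq nat;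
  fnodes : seq node }.

Definition relabel_node (f : nat -> nat) (nd : node) : node :=
  Node (nkind nd) (map f (nins nd)) (map f (nouts nd)).

Definition flat_gen (g : generator) : fdiag :=
  match g with
  | GId => FDiag 1 [:: 0%N] [:: 0%N] [:: 0%N] [::]
  | GSwap => FDiag 2 [:: 0%N; 1%N] [:: 0%N; 1%N] [:: 1%N; 0%N] [::]
  | GCup => FDiag 2 [:: 0%N; 1%N] [:: 0%N; 1%N] [::]
                  [:: Node NCup [:: 0%N; 1%N] [::]]
  | GCap => FDiag 2 [:: 0%N; 1%N] [::] [:: 0%N; 1%N]
                  [:: Node NCap [::] [:: 0%N; 1%N]]
  | GZ n m a => FDiag (n + m) (iota 0 (n + m)) (iota 0 n) (iota n m)
                  [:: Node (NZ a) (iota 0 n) (iota n m)]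
  | GH => FDiag 2 [:: 0%N; 1%N] [:: 0%N] [:: 1%N] [:: Node NH [:: 0%N] [:: 1%N]]
  end.

Definition par_fd (F1 F2 : fdiag) : fdiag :=
  let f := fun j => (fbound F1 + j)%N in
  FDiag (fbound F1 + fbound F2)
        (fedges F1 ++ map f (fedges F2))
        (fins F1 ++ map f (fins F2))
        (fouts F1 ++ map f (fouts F2))
        (fnodes F1 ++ map (relabel_node f) (fnodes F2)).

Definition seq_fd (F1 F2 : fdiag) : fdiag :=
  let f := fun j => if j \in fins F2 then nth 0%N (fouts F1) (index j (fins F2))
                    else (fbound F1 + j)%N in
  FDiag (fbound F1 + fbound F2)
        (fedges F1 ++ map f [seq j <- fedges F2 | j \notin fins F2])
        (fins F1)
        (map f (fouts F2))
        (fnodes F1 ++ map (relabel_node f) (fnodes F2)).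

Fixpoint flat (D : diagram) : fdiag :=
  match D with
  | DGen g => flat_gen g
  | DSeq D1 D2 => seq_fd (flat D1) (flat D2)
  | DPar D1 D2 => par_fd (flat D1) (flat D2)
  end.

Fixpoint wf (D : diagram) : bool :=
  match D with
  | DGen _ => true
  | DSeq D1 D2 => [&& wf D1, wf D2 & size (fouts (flat D1)) == size (fins (flat D2))]
  | DPar D1 D2 => wf D1 && wf D2
  end.

Notation down := true.
Notation up := false.

(* A token (e d x) : edge label, direction, bit. *)
Definition token : Type := (nat * bool * bool)%type.

Definition tok_edge (t : token) : nat := t.1.1.

(* Monomials in the commuting indeterminates "tokens". *)
Definition monomial : Type := {mset token}%mset.

Definition mono_of (ts : seq token) : monomial := seq_mset ts.

Definition mono1 (t : token) : monomial := msetn 1 t.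

(* A token state: an element of C[tokens], given by its coefficient function.
   Its terms are the monomials with nonzero coefficient. *)
Definition tstate : Type := monomial -> Cplx.

Definition state_of_mono (m : monomial) : tstate := fun u => (u == m)%:R.

Definition poly_list : Type := seq (Cplx * monomial).

Definition node_rule (nd : node) (t : token) (rhs : poly_list) : Prop :=
  let: (e, d, x) := t in
  let I := nins nd in
  let O := nouts nd in
  match nkind nd with
  | NCup => d = down /\ exists b : bool,
        e = nth 0%N I b /\ rhs = [:: (1, mono1 (nth 0%N I (~~ b), up, x))]
  | NCap => d = up /\ exists b : bool,
        e = nth 0%N O b /\ rhs = [:: (1, mono1 (nth 0%N O (~~ b), down, x))]
  | NZ a =>
      (d = down /\ exists2 k, (k < size I)%N & e = nth 0%N I k /\
         rhs = [:: (phase a x,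
                    mono_of ([seq (nth 0%N I i, up, x) | i <- iota 0 (size I) & i != k]
                             ++ [seq (o, down, x) | o <- O]))])
   \/ (d = up /\ exists2 k, (k < size O)%N & e = nth 0%N O k /\
         rhs = [:: (phase a x,
                    mono_of ([seq (nth 0%N O j, down, x) | j <- iota 0 (size O) & j != k]
                             ++ [seq (i, up, x) | i <- I]))])
  | NH =>
      (d = down /\ e = nth 0%N I 0 /\
         rhs = [:: ((-1) ^+ x * invsqrt2, mono1 (nth 0%N O 0, down, x));
                   (invsqrt2, mono1 (nth 0%N O 0, down, ~~ x))])
   \/ (d = up /\ e = nth 0%N O 0 /\
         rhs = [:: ((-1) ^+ x * invsqrt2, mono1 (nth 0%N I 0, up, x));
                   (invsqrt2, mono1 (nth 0%N I 0, up, ~~ x))])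
  end.

Definition diffusion_rule (F : fdiag) (t : token) (rhs : poly_list) : Prop :=
  exists2 nd, List.In nd (fnodes F) & node_rule nd t rhs.

(* s ~>_d s' : pick a term c*m of s and a token t dividing m, replace t by
   the right-hand side of its diffusion rule and expand. *)
Definition d_step (F : fdiag) (s s' : tstate) : Prop :=
  exists m t rhs,
    [/\ s m != 0, (0 < m t)%N, diffusion_rule F t rhs &
        forall u, s' u = s u - (u == m)%:R * s m
                         + s m * \sum_(p <- rhs) (u == msetD (msetB m (mono1 t)) p.2)%:R * p.1].

(* s ~>_c s' : pick a term c*m of s and a colliding pair (e d x)(e u y)
   dividing m, and replace it by delta_{x,y}. *)
Definition c_step (s s' : tstate) : Prop :=
  exists m e x y,
    [/\ s m != 0, (0 < m (e, down, x))%N, (0 < m (e, up, y))%N &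
        forall u, s' u = s u - (u == m)%:R * s m
          + (x == y)%:R * s m
            * (u == msetB (msetB m (mono1 (e, down, x))) (mono1 (e, up, y)))%:R].

Definition collision_free (s : tstate) : Prop :=
  forall m, s m != 0 -> forall e x y, ~ ((0 < m (e, down, x))%N /\ (0 < m (e, up, y))%N).

Inductive star (A : Type) (r : A -> A -> Prop) : A -> A -> Prop :=
| star_refl a : star r a a
| star_step a b c : r a b -> star r b c -> star r a c.

Definition big_step (F : fdiag) (s u : tstate) : Prop :=
  exists2 s', d_step F s s' & star c_step s' u /\ collision_free u.

(* Vertices: node occurrences (by index) and an endpoint for each dangling
   top (resp. bottom) end of an edge. *)
Inductive vertex := VNode of nat | VTop of nat | VBot of nat.

Definition top_vertex (F : fdiag) (e : nat) : vertex :=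
  let k := find (fun nd => e \in nouts nd) (fnodes F) in
  if (k < size (fnodes F))%N then VNode k else VTop e.

Definition bot_vertex (F : fdiag) (e : nat) : vertex :=
  let k := find (fun nd => e \in nins nd) (fnodes F) in
  if (k < size (fnodes F))%N then VNode k else VBot e.

(* A traversed edge: (edge, orientation), orientation true = down. *)
Definition tedge : Type := (nat * bool)%type.

Definition entry (F : fdiag) (a : tedge) : vertex :=
  if a.2 then top_vertex F a.1 else bot_vertex F a.1.
Definition exit (F : fdiag) (a : tedge) : vertex :=
  if a.2 then bot_vertex F a.1 else top_vertex F a.1.

Definition is_path (F : fdiag) (p : seq tedge) : Prop :=
  [/\ p != [::],
      all (fun a => a.1 \in fedges F) p,
      uniq (map fst p),
      (forall i, (i.+1 < size p)%N ->
          exit F (nth (0%N, down) p i) = entry F (nth (0%N, down) p i.+1)) &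
      (forall i j, (i < j)%N -> (j.+1 < size p)%N ->
          exit F (nth (0%N, down) p i) <> exit F (nth (0%N, down) p j))].

Definition is_cycle (F : fdiag) (p : seq tedge) : Prop :=
  is_path F p /\ exit F (last (0%N, down) p) = entry F (head (0%N, down) p).

Definition polarity_tok (c : seq tedge) (t : token) : int :=
  let: (e, d, _) := t in
  if (e, d) \in c then 1 else if (e, ~~ d) \in c then -1 else 0.

Definition polarity (c : seq tedge) (m : monomial) : int :=
  \sum_(t <- enum_mset m) polarity_tok c t.

From HB Require Import structures.
From mathcomp Require Import all_boot all_order all_algebra.
From mathcomp Require Import complex finmap multiset Rstruct.
From mathcomp Require Import zify.

Set Implicit Arguments.
Unset Strict Implicit.
Unset Printing Implicit Defensive.

Import Order.TTheory GRing.Theory Num.Theory.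

Local Open Scope ring_scope.

(* Polarity is additive over monomials, so a step preserves the polarity of every
   term as soon as each rule does.  A collision removes a pair (e↓x)(e↑y), whose
   polarities cancel because a cycle traverses e in one orientation only.  A
   diffusion step at a node replaces a token by tokens on the other edges of the
   node; since the sequence of vertices at which the cycle leaves its edges is a
   rotation of the sequence at which it arrives, the cycle leaves every node as
   often as it arrives, and this balance is exactly what makes the rules of cups,
   caps, spiders and Hadamard gates polarity-preserving.  It needs every edge of a
   composed diagram to have a unique top and bottom end, which is proved by
   induction on the diagram. *)

Lemma polarity_perm c (m : monomial) (s : seq token) :
  perm_eq (enum_mset m) s -> polarity c m = \sum_(t <- s) polarity_tok c t.
Proof. by move=> ms; rewrite /polarity (perm_big _ ms). Qed.

Lemma polarity_mono_of c s : polarity c (mono_of s) = \sum_(t <- s) polarity_tok c t.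
Proof. exact/polarity_perm/perm_eq_seq_mset. Qed.

Lemma polarity_mono1 c t : polarity c (mono1 t) = polarity_tok c t.
Proof. by rewrite /polarity /mono1 enum_msetn big_seq1. Qed.

Lemma polarityD c (A B : monomial) :
  polarity c (msetD A B) = polarity c A + polarity c B.
Proof.
rewrite (@polarity_perm _ _ (enum_mset A ++ enum_mset B)) ?big_cat //.
by apply/allP => t _ /=; rewrite count_cat !count_mem_mset msetE2.
Qed.

Lemma polarity_msetB1 c (m : monomial) t : (0 < m t)%N ->
  polarity c m = polarity_tok c t + polarity c (msetB m (mono1 t)).
Proof. by move=> mt; rewrite -{1}(@msetB1K _ t m) ?polarityD ?polarity_mono1 ?in_mset. Qed.

Definition edge_polarity (c : seq tedge) (e : nat) (d : bool) : int :=
  if (e, d) \in c then 1 else if (e, ~~ d) \in c then -1 else 0.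

Lemma polarity_tokE c e d x : polarity_tok c (e, d, x) = edge_polarity c e d.
Proof. by []. Qed.

Section EdgePolarity.

Variable c : seq tedge.
Hypothesis c_uniq : uniq (map fst c).

Lemma orientation_uniq e d d' : (e, d) \in c -> (e, d') \in c -> d = d'.
Proof.
move=> ed ed'; have /(nthP (0%N, down)) [i ic ci] := ed.
have /(nthP (0%N, down)) [j jc cj] := ed'.
have ij : i = j.
  apply: (uniqP 0%N c_uniq); rewrite ?inE ?size_map //.
  by rewrite !(nth_map (0%N, down)) // ci cj.
by move: ci cj; rewrite ij => -> [].
Qed.

Lemma edge_polarityN e d : edge_polarity c e (~~ d) = - edge_polarity c e d.
Proof.
have not_both : ~~ (((e, d) \in c) && ((e, ~~ d) \in c)).
  by apply/andP => -[ed edN]; move: (orientation_uniq ed edN); case: (d).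
rewrite /edge_polarity negbK.
by move: not_both; case: ((e, d) \in c); case: ((e, ~~ d) \in c); rewrite ?opprK ?oppr0.
Qed.

Lemma edge_polarity_sum e d :
  edge_polarity c e d = \sum_(a <- c | a.1 == e) (-1) ^+ (a.2 != d).
Proof.
rewrite /edge_polarity; elim: c c_uniq => [|[e' d'] c' IH] /=; first by rewrite big_nil.
case/andP=> e'_c' u_c'; rewrite big_cons /= !in_cons !xpair_eqE -IH //.
have notin d0 : (e', d0) \in c' = false.
  by apply/negP => ?; case/negP: e'_c'; apply/mapP; exists (e', d0).
have [<- | ne] := eqVneq e' e; last by rewrite !andFb.
by rewrite !notin /= !orbF addr0; case: (d); case: d'.
Qed.

Lemma sum_edge_polarity (s : seq nat) d : uniq s ->
  \sum_(e <- s) edge_polarity c e d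
    = \sum_(a <- c) (if a.1 \in s then (-1) ^+ (a.2 != d) else 0).
Proof.
move=> s_uniq; under eq_bigr do rewrite edge_polarity_sum big_mkcond.
rewrite exchange_big; apply: eq_bigr => a _.
rewrite -big_mkcond -big_filter /=.
have [a_s | a_s] := boolP (a.1 \in s).
  rewrite (eq_filter (_ : _ =1 pred1 a.1)) => [|e]; last by rewrite /= eq_sym.
  by rewrite filter_pred1_uniq ?big_seq1.
rewrite big_hasC //; apply/hasPn => e; rewrite mem_filter => /andP[/eqP<-].
by rewrite (negbTE a_s).
Qed.

End EdgePolarity.

Lemma polarity_collision c e x y : uniq (map fst c) ->
  polarity_tok c (e, down, x) + polarity_tok c (e, up, y) = 0.
Proof. by move=> c_uniq; rewrite !polarity_tokE -[down]/(~~ up) edge_polarityN // addNr. Qed.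

Definition homogeneous (c : seq tedge) (p : int) (s : tstate) : Prop :=
  forall m, s m != 0 -> polarity c m = p.

Lemma homogeneous_replace c p (s s' : tstate) m (r : tstate) :
  homogeneous c p s -> (forall u, r u != 0 -> polarity c u = p) ->
  (forall u, s' u = s u - (u == m)%:R * s m + r u) -> homogeneous c p s'.
Proof.
move=> s_hom r_hom s'E u; rewrite s'E.
have [su0 | su] := eqVneq (s u) 0; last by move=> _; exact: s_hom.
have -> : s u - (u == m)%:R * s m = 0 by case: eqVneq => [<- | _]; rewrite su0 ?mulr0 ?mul0r subrr.
by rewrite add0r; exact: r_hom.
Qed.

Lemma d_step_homogeneous F c p s s' :
  (forall t rhs, diffusion_rule F t rhs -> forall q, q \in rhs ->
     polarity c q.2 = polarity_tok c t) ->
  homogeneous c p s -> d_step F s s' -> homogeneous c p s'.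
Proof.
move=> rule_pol s_hom [m [t [rhs [sm mt rule s'E]]]].
apply: (homogeneous_replace s_hom _ s'E) => u ru.
have /hasP [q q_rhs /eqP ->] : has (fun q => u == msetD (msetB m (mono1 t)) q.2) rhs.
  apply: contraNT ru => /hasPn no_q.
  by rewrite big1_seq ?mulr0 // => q /no_q /negbTE ->; rewrite mul0r.
by rewrite polarityD (rule_pol _ _ rule _ q_rhs) addrC -polarity_msetB1 // s_hom.
Qed.

Lemma c_step_homogeneous c p s s' : uniq (map fst c) ->
  homogeneous c p s -> c_step s s' -> homogeneous c p s'.
Proof.
move=> c_uniq s_hom [m [e [x [y [sm m_down m_up s'E]]]]].
apply: (homogeneous_replace s_hom _ s'E) => u.
case: (@eqP _ u) => [-> _ | _]; last by rewrite mulr0 eqxx.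
have m'_up : (0 < msetB m (mono1 (e, down, x)) (e, up, y))%N.
  by rewrite msetE2 msetnE !xpair_eqE andbF subn0.
rewrite -(s_hom _ sm) (polarity_msetB1 c m_down) (polarity_msetB1 c m'_up).
by rewrite addrA polarity_collision // add0r.
Qed.

Lemma star_invariant A (r : A -> A -> Prop) (P : A -> Prop) :
  (forall a b, P a -> r a b -> P b) -> forall a b, P a -> star r a b -> P b.
Proof. by move=> Pr a b Pa ab; elim: ab Pa => // a' b' c' ab' _ IH /Pr /(_ ab') /IH. Qed.

Lemma cycle_exit_rot F c : is_cycle F c -> map (exit F) c = rot 1 (map (entry F) c).
Proof.
case=> -[c_nil _ _ c_step _]; case: c c_nil c_step => // a c _ c_step c_closed.
rewrite [in RHS]map_cons rot1_cons; apply: (@eq_from_nth _ (VTop 0)) => [|i].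
  by rewrite /= size_rcons !size_map.
rewrite size_map ltnS => i_le; rewrite nth_rcons size_map (nth_map (0%N, down)) //.
case: ltngtP i_le => // [i_lt _ | -> _].
  by rewrite (nth_map (0%N, down)) // c_step.
by rewrite -[nth _ _ _]/(nth _ (a :: c) (size (a :: c)).-1) nth_last.
Qed.

Lemma cycle_count_entry_exit F c (P : pred vertex) : is_cycle F c ->
  count (fun a => P (entry F a)) c = count (fun a => P (exit F a)) c.
Proof.
move=> /cycle_exit_rot exit_rot.
transitivity (count P (map (exit F) c)); last by rewrite count_map.
by rewrite exit_rot /rot count_cat addnC -count_cat cat_take_drop count_map.
Qed.

Definition at_node (k : nat) (v : vertex) : bool :=
  if v is VNode j then j == k else false.

Definition node_ins (L : seq node) : seq nat := flatten (map nins L).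
Definition node_outs (L : seq node) : seq nat := flatten (map nouts L).

Lemma find_mem_uniq_flatten (T : Type) (X : eqType) (sel : T -> seq X) (L : seq T) x k a0 :
  uniq (flatten (map sel L)) -> (k < size L)%N ->
  (find (fun a => x \in sel a) L == k) = (x \in sel (nth a0 L k)).
Proof.
elim: L k => [|a L IH] [|k] //=; rewrite cat_uniq => /and3P[_ disj u_L] k_lt.
  by case: (x \in sel a).
case: ifP => x_a; last by rewrite eqSS IH.
apply/esym; apply: contraNF disj => x_k; apply/hasP; exists x => //.
have sel_k : sel (nth a0 L k) \in map sel L by rewrite -(nth_map a0 [::]) ?mem_nth ?size_map.
by apply/flattenP; exists (sel (nth a0 L k)).
Qed.

Lemma uniq_flatten_mem (X : eqType) (ss : seq (seq X)) s :
  uniq (flatten ss) -> s \in ss -> uniq s.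
Proof.
elim: ss => //= s' ss IH; rewrite cat_uniq in_cons => /and3P[u_s' _ u_ss].
by case/orP=> [/eqP-> // | /IH]; apply.
Qed.

Section NodeVertex.

Variables (F : fdiag) (k : nat) (nd0 : node).
Hypothesis k_lt : (k < size (fnodes F))%N.
Let nd := nth nd0 (fnodes F) k.

Lemma at_node_top_vertex e : uniq (node_outs (fnodes F)) ->
  at_node k (top_vertex F e) = (e \in nouts nd).
Proof.
move=> u_outs; rewrite -(find_mem_uniq_flatten e nd0 u_outs k_lt) /top_vertex.
by case: ltnP => // j_ge; rewrite gtn_eqF // (leq_trans k_lt j_ge).
Qed.

Lemma at_node_bot_vertex e : uniq (node_ins (fnodes F)) ->
  at_node k (bot_vertex F e) = (e \in nins nd).
Proof.
move=> u_ins; rewrite -(find_mem_uniq_flatten e nd0 u_ins k_lt) /bot_vertex.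
by case: ltnP => // j_ge; rewrite gtn_eqF // (leq_trans k_lt j_ge).
Qed.

End NodeVertex.

Lemma sumz_count (T : Type) (s : seq T) (P : pred T) :
  \sum_(x <- s) (P x : int) = count P s.
Proof. by elim: s => [|x s IH]; rewrite ?big_nil ?big_cons ?IH // PoszD. Qed.

(* The number of edges along which the cycle [c] leaves [nd] minus the number
   along which it arrives at [nd]. *)
Definition node_flux (c : seq tedge) (nd : node) : int :=
  \sum_(e <- nins nd) edge_polarity c e up + \sum_(e <- nouts nd) edge_polarity c e down.

Lemma node_balance F c k nd0 : is_cycle F c ->
  uniq (node_ins (fnodes F)) -> uniq (node_outs (fnodes F)) -> (k < size (fnodes F))%N ->
  node_flux c (nth nd0 (fnodes F) k) = 0.
Proof.
move=> cyc u_ins u_outs k_lt; set nd := nth nd0 (fnodes F) k.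
have c_uniq : uniq (map fst c) by case: cyc => -[].
have nd_map (sel : node -> seq nat) : sel nd \in map sel (fnodes F).
  by rewrite /nd -(nth_map nd0 [::]) ?mem_nth ?size_map.
have u_I : uniq (nins nd) := uniq_flatten_mem u_ins (nd_map nins).
have u_O : uniq (nouts nd) := uniq_flatten_mem u_outs (nd_map nouts).
rewrite /node_flux !sum_edge_polarity // -big_split /=.
have flow := cycle_count_entry_exit (at_node k) cyc.
have leave_minus_arrive (a : tedge) :
    (if a.1 \in nins nd then (-1) ^+ (a.2 != up) else 0)
    + (if a.1 \in nouts nd then (-1) ^+ (a.2 != down) else 0)
    = (at_node k (entry F a) : int) - (at_node k (exit F a) : int).
  case: a => e [] /=; rewrite /entry /exit /= (at_node_top_vertex nd0 k_lt e u_outs);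
    rewrite (at_node_bot_vertex nd0 k_lt e u_ins) -/nd;
    by case: (e \in nins nd); case: (e \in nouts nd); rewrite /= ?expr0 ?expr1.
by rewrite (eq_bigr _ (fun a _ => leave_minus_arrive a)) sumrB !sumz_count flow subrr.
Qed.

Definition arity_ok (nd : node) : bool :=
  match nkind nd with
  | NCup => (size (nins nd) == 2) && (size (nouts nd) == 0)
  | NCap => (size (nins nd) == 0) && (size (nouts nd) == 2)
  | NZ _ => true
  | NH => (size (nins nd) == 1) && (size (nouts nd) == 1)
  end.

Lemma polarity_spider_rhs c (s o : seq nat) k d d' x : (k < size s)%N ->
  polarity c (mono_of ([seq (nth 0%N s i, d, x) | i <- iota 0 (size s) & i != k]
                       ++ [seq (e, d', x) | e <- o]))
  = \sum_(e <- s) edge_polarity c e d - edge_polarity c (nth 0%N s k) d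
    + \sum_(e <- o) edge_polarity c e d'.
Proof.
move=> k_lt; rewrite polarity_mono_of big_cat !big_map big_filter.
have -> : \sum_(e <- s) edge_polarity c e d = edge_polarity c (nth 0%N s k) d
    + \sum_(i <- iota 0 (size s) | i != k) edge_polarity c (nth 0%N s i) d.
  by rewrite (big_nth 0%N) /index_iota subn0 (bigD1_seq k) ?mem_iota ?iota_uniq.
by rewrite (addrC (edge_polarity _ _ _)) addrK.
Qed.

Lemma node_rule_polarity c nd t rhs : uniq (map fst c) -> arity_ok nd -> node_flux c nd = 0 ->
  node_rule nd t rhs -> forall q, q \in rhs -> polarity c q.2 = polarity_tok c t.
Proof.
move=> c_uniq; have epD e : edge_polarity c e down = - edge_polarity c e up.
  by rewrite -edge_polarityN.
case: nd => -[||a|] I O; case: t => -[e d] x;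
  rewrite polarity_tokE /arity_ok /node_flux /node_rule /=.
- case/andP=> /eqP sizeI /eqP sizeO; case: O sizeO => // _; case: I sizeI => [|i0 [|i1 []]] // _.
  rewrite !big_cons !big_nil => bal [-> [b [-> ->]]] q; rewrite inE => /eqP->.
  by rewrite polarity_mono1 polarity_tokE epD; move: bal; case: b => /=; lia.
- case/andP=> /eqP sizeI /eqP sizeO; case: I sizeI => // _; case: O sizeO => [|o0 [|o1 []]] // _.
  rewrite !big_cons !big_nil => bal [-> [b [-> ->]]] q; rewrite inE => /eqP->.
  by rewrite polarity_mono1 polarity_tokE; move: bal; case: b => /=; rewrite !epD; lia.
- move=> _ bal [[-> [k k_lt [-> ->]]] | [-> [k k_lt [-> ->]]]] q; rewrite inE => /eqP->.
  + by rewrite polarity_spider_rhs // addrAC bal add0r epD.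
  + by rewrite polarity_spider_rhs // addrAC [_ + \sum_(e <- I) _]addrC bal add0r epD opprK.
- case/andP=> /eqP sizeI /eqP sizeO.
  case: I sizeI => [|i0 []] // _; case: O sizeO => [|o0 []] // _.
  rewrite !big_cons !big_nil => bal [[-> [-> ->]] | [-> [-> ->]]] q;
    rewrite !inE => /orP[] /eqP->; rewrite polarity_mono1 polarity_tokE;
    move: bal; rewrite /= !epD; lia.
Qed.

Definition tops (F : fdiag) : seq nat := fins F ++ node_outs (fnodes F).
Definition bottoms (F : fdiag) : seq nat := fouts F ++ node_ins (fnodes F).

(* Every edge has at most one top end (a dangling input or a node output) and at
   most one bottom end, and all labels lie below [fbound F], so that the shifted
   labels of a composition are fresh. *)
Record well_labelled (F : fdiag) : Prop := WellLabelled {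
  uniq_tops : uniq (tops F);
  uniq_bottoms : uniq (bottoms F);
  tops_bounded : all (fun e => e < fbound F)%N (tops F);
  bottoms_bounded : all (fun e => e < fbound F)%N (bottoms F);
  arities_ok : all arity_ok (fnodes F) }.

Lemma node_ins_glue L1 L2 f :
  node_ins (L1 ++ map (relabel_node f) L2) = node_ins L1 ++ map f (node_ins L2).
Proof. by rewrite /node_ins map_cat flatten_cat -map_comp map_flatten -map_comp. Qed.

Lemma node_outs_glue L1 L2 f :
  node_outs (L1 ++ map (relabel_node f) L2) = node_outs L1 ++ map f (node_outs L2).
Proof. by rewrite /node_outs map_cat flatten_cat -map_comp map_flatten -map_comp. Qed.

Lemma arity_ok_relabel f nd : arity_ok (relabel_node f nd) = arity_ok nd.
Proof. by case: nd => -[||?|] I O; rewrite /arity_ok /= ?size_map. Qed.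

Lemma arities_ok_glue L1 L2 f : all arity_ok L1 -> all arity_ok L2 ->
  all arity_ok (L1 ++ map (relabel_node f) L2).
Proof. by move=> ar1 ar2; rewrite all_cat ar1 all_map (eq_all (arity_ok_relabel f)). Qed.

Lemma notin_bounded (s : seq nat) b j : all (fun e => e < b)%N s -> (b <= j)%N -> j \notin s.
Proof. by move=> /allP s_lt b_j; apply/negP => /s_lt; rewrite ltnNge b_j. Qed.

Lemma uniq_cat_map_inj (s1 s2 : seq nat) f : injective f -> uniq s1 -> uniq s2 ->
  {in s2, forall j, f j \notin s1} -> uniq (s1 ++ map f s2).
Proof.
move=> f_inj u1 u2 disj; rewrite cat_uniq u1 map_inj_uniq // u2 andbT.
by apply/hasPn => _ /mapP[j j_s2 ->]; exact: disj.
Qed.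

Lemma well_labelled_par F1 F2 : well_labelled F1 -> well_labelled F2 ->
  well_labelled (par_fd F1 F2).
Proof.
move=> [ut1 ub1 tb1 bb1 ar1] [ut2 ub2 tb2 bb2 ar2].
pose sh := addn (fbound F1).
have topsE : perm_eq (tops (par_fd F1 F2)) (tops F1 ++ map sh (tops F2)).
  by rewrite /tops /= node_outs_glue map_cat perm_catACA.
have botsE : perm_eq (bottoms (par_fd F1 F2)) (bottoms F1 ++ map sh (bottoms F2)).
  by rewrite /bottoms /= node_ins_glue map_cat perm_catACA.
have bounded s1 s2 : all (fun e => e < fbound F1)%N s1 -> all (fun e => e < fbound F2)%N s2 ->
    all (fun e => e < fbound F1 + fbound F2)%N (s1 ++ map sh s2).
  move=> /allP b1 /allP b2; rewrite all_cat all_map; apply/andP; split; apply/allP => e.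
    by move/b1/leq_trans; apply; rewrite leq_addr.
  by move/b2; rewrite /= ltn_add2l.
split.
- rewrite (perm_uniq topsE) uniq_cat_map_inj //; first exact: addnI.
  by move=> j _; apply: notin_bounded tb1 _; rewrite leq_addr.
- rewrite (perm_uniq botsE) uniq_cat_map_inj //; first exact: addnI.
  by move=> j _; apply: notin_bounded bb1 _; rewrite leq_addr.
- by rewrite (perm_all _ topsE) bounded.
- by rewrite (perm_all _ botsE) bounded.
- exact: arities_ok_glue.
Qed.

Section SeqGlue.

Variables F1 F2 : fdiag.
Hypothesis wl1 : well_labelled F1.
Hypothesis sizes_match : size (fouts F1) = size (fins F2).

Definition glue (j : nat) : nat :=
  if j \in fins F2 then nth 0%N (fouts F1) (index j (fins F2)) else (fbound F1 + j)%N.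

Lemma glue_fins j : j \in fins F2 -> glue j \in fouts F1.
Proof. by move=> j_in; rewrite /glue j_in mem_nth // sizes_match index_mem. Qed.

Lemma glue_notin j : j \notin fins F2 -> glue j = (fbound F1 + j)%N.
Proof. by move=> j_out; rewrite /glue (negbTE j_out). Qed.

Lemma glue_fouts_lt j : j \in fins F2 -> (glue j < fbound F1)%N.
Proof.
move=> /glue_fins j_out; apply: (allP (bottoms_bounded wl1)).
by rewrite mem_cat j_out.
Qed.

Lemma glue_inj : injective glue.
Proof.
have u_fouts : uniq (fouts F1) by have := uniq_bottoms wl1; rewrite cat_uniq => /andP[].
move=> j1 j2; case: (boolP (j1 \in fins F2)) => j1_in; case: (boolP (j2 \in fins F2)) => j2_in.
- rewrite /glue j1_in j2_in => /eqP; rewrite nth_uniq ?sizes_match ?index_mem // => /eqP.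
  by move/(congr1 (nth 0%N (fins F2))); rewrite !nth_index.
- move=> E; have := glue_fouts_lt j1_in; rewrite E glue_notin //.
  by rewrite ltnNge leq_addr.
- move=> E; have := glue_fouts_lt j2_in; rewrite -E glue_notin //.
  by rewrite ltnNge leq_addr.
- by rewrite !glue_notin // => /addnI.
Qed.

Lemma glue_lt j : (j < fbound F2)%N -> (glue j < fbound F1 + fbound F2)%N.
Proof.
case: (boolP (j \in fins F2)) => j_in j_lt; last by rewrite glue_notin // ltn_add2l.
exact: leq_trans (glue_fouts_lt j_in) (leq_addr _ _).
Qed.

Lemma well_labelled_seq : well_labelled F2 -> well_labelled (seq_fd F1 F2).
Proof.
move: wl1 => [ut1 ub1 tb1 bb1 ar1] [ut2 ub2 tb2 bb2 ar2].
have topsE : tops (seq_fd F1 F2) = tops F1 ++ map glue (node_outs (fnodes F2)).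
  by rewrite /tops /= node_outs_glue catA.
have botsE : perm_eq (bottoms (seq_fd F1 F2))
                     (node_ins (fnodes F1) ++ map glue (bottoms F2)).
  by rewrite /bottoms /= node_ins_glue map_cat perm_catCA.
have [/hasPn nouts2_fresh u_nouts2] : ~~ has (mem (fins F2)) (node_outs (fnodes F2))
                                      /\ uniq (node_outs (fnodes F2)).
  by move: ut2; rewrite cat_uniq => /and3P[].
have [/hasPn nins1_fresh u_nins1] : ~~ has (mem (fouts F1)) (node_ins (fnodes F1))
                                    /\ uniq (node_ins (fnodes F1)).
  by move: ub1; rewrite cat_uniq => /and3P[].
have nins1_lt : all (fun e => e < fbound F1)%N (node_ins (fnodes F1)).
  by move: bb1; rewrite all_cat => /andP[].
have nouts2_lt : all (fun e => e < fbound F2)%N (node_outs (fnodes F2)).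
  by move: tb2; rewrite all_cat => /andP[].
have widen s : all (fun e => e < fbound F1)%N s -> all (fun e => e < fbound F1 + fbound F2)%N s.
  by move=> /allP s_lt; apply/allP => e /s_lt /leq_trans; apply; rewrite leq_addr.
have glued_lt s : all (fun e => e < fbound F2)%N s ->
    all (fun e => e < fbound F1 + fbound F2)%N (map glue s).
  by move=> /allP s_lt; rewrite all_map; apply/allP => e /s_lt /glue_lt.
split.
- rewrite topsE uniq_cat_map_inj //; first exact: glue_inj.
  move=> j /nouts2_fresh j_out; rewrite glue_notin //.
  by apply: notin_bounded tb1 _; rewrite leq_addr.
- rewrite (perm_uniq botsE) uniq_cat_map_inj //; first exact: glue_inj.
  move=> j _; case: (boolP (j \in fins F2)) => j_in.
    by apply: contraL (glue_fins j_in) => /nins1_fresh.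
  by rewrite glue_notin //; apply: notin_bounded nins1_lt _; rewrite leq_addr.
- by rewrite topsE all_cat widen // glued_lt.
- by rewrite (perm_all _ botsE) all_cat widen // glued_lt.
- exact: arities_ok_glue.
Qed.

End SeqGlue.

Lemma well_labelled_gen g : well_labelled (flat_gen g).
Proof.
case: g => [||||n m a|]; split => //; rewrite /tops /bottoms /node_ins /node_outs /= cats0.
all: have iota_nm : iota 0 n ++ iota n m = iota 0 (n + m) by rewrite iotaD.
- by rewrite iota_nm iota_uniq.
- by rewrite uniq_catC iota_nm iota_uniq.
- by rewrite iota_nm; apply/allP => e; rewrite mem_iota.
- by rewrite all_cat andbC -all_cat iota_nm; apply/allP => e; rewrite mem_iota.
Qed.

Lemma flat_well_labelled D : wf D -> well_labelled (flat D).
Proof.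
elim: D => [g | D1 IH1 D2 IH2 | D1 IH1 D2 IH2] /=.
- by move=> _; apply: well_labelled_gen.
- by case/and3P=> /IH1 wl1 /IH2 wl2 /eqP sizes; apply: well_labelled_seq.
- by case/andP=> /IH1 wl1 /IH2 wl2; apply: well_labelled_par.
Qed.

Lemma In_seq_nth (T : Type) (s : seq T) x :
  List.In x s -> exists2 k, (k < size s)%N & nth x s k = x.
Proof.
elim: s => //= y s IH [-> | /IH[k k_lt sk]]; first by exists 0%N.
by exists k.+1.
Qed.

Lemma diffusion_rule_polarity F c : well_labelled F -> is_cycle F c ->
  forall t rhs, diffusion_rule F t rhs -> forall q, q \in rhs -> polarity c q.2 = polarity_tok c t.
Proof.
move=> [ut ub _ _ ar] cyc t rhs [nd nd_in rule]; have [k k_lt nd_k] := In_seq_nth nd_in.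
have u_ins : uniq (node_ins (fnodes F)) by move: ub; rewrite cat_uniq => /and3P[].
have u_outs : uniq (node_outs (fnodes F)) by move: ut; rewrite cat_uniq => /and3P[].
apply: node_rule_polarity rule; first by case: cyc => -[].
  by rewrite -nd_k; apply: (all_nthP _ ar).
by rewrite -nd_k; apply: node_balance.
Qed.

Lemma big_step_homogeneous F c p s s' : well_labelled F -> is_cycle F c ->
  homogeneous c p s -> big_step F s s' -> homogeneous c p s'.
Proof.
move=> wl cyc s_hom [s1 d_s1 [c_steps _]].
have c_uniq : uniq (map fst c) by case: cyc => -[].
have s1_hom := d_step_homogeneous (diffusion_rule_polarity wl cyc) s_hom d_s1.
by apply: (star_invariant _ s1_hom c_steps) => s2 s3; apply: c_step_homogeneous.
Qed.

Theorem mainTheorem3 (D : diagram) (c : seq tedge) (ts : seq token) (s : tstate) :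
  wf D ->
  is_cycle (flat D) c ->
  (forall t, t \in ts -> tok_edge t \in fedges (flat D)) ->
  star (big_step (flat D)) (state_of_mono (mono_of ts)) s ->
  forall m : monomial, s m != 0 -> polarity c (mono_of ts) = polarity c m.
Proof.
(* Polarity is preserved whether or not the initial tokens lie on edges of [D]. *)
move=> wfD cyc _ steps m sm.
pose P0 := polarity c (mono_of ts).
have init : homogeneous c P0 (state_of_mono (mono_of ts)).
  by move=> u; rewrite /state_of_mono; case: (@eqP _ u) => [-> | _]; rewrite ?mulr0n ?eqxx.
have step s1 s2 : homogeneous c P0 s1 -> big_step (flat D) s1 s2 -> homogeneous c P0 s2.
  exact: big_step_homogeneous (flat_well_labelled wfD) cyc.
by rewrite (star_invariant step init steps _ sm).
Qed.
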